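(* Let $r\ge2$ and let $n_{kj}$ ($1\le j<k\le r$) be nonnegative integers, with $p_k=\sum_{j<k}n_{kj}$ and $q_j=\sum_{k>j}n_{kj}$. The following are equivalent: (i) there exists $m\in\{0,1\}$ such that $\frac{\pi}{4}\sum_{1\le j<k\le r}\varepsilon_j\delta_kn_{kj}\equiv m\pi\pmod{2\pi}$ for all $\boldsymbol{\varepsilon},\boldsymbol{\delta}\in\{1,-1\}^r$; (ii) every $n_{kj}$ is even, and every $p_k$ and every $q_j$ is divisible by $4$.
   Context: Here $\boldsymbol{\varepsilon}=(\varepsilon_1,\dots,\varepsilon_r)$ and $\boldsymbol{\delta}=(\delta_1,\dots,\delta_r)$ range over $\{1,-1\}^r$. (In the paper, $n_{kj}=\dim V_{kj}$ are the structure constants of a homogeneous cone, but the statement is purely arithmetic.) *)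

From HB Require Import structures.
From mathcomp Require Import all_boot all_order all_algebra.
From mathcomp Require Import reals trigo.
Set Implicit Arguments. Unset Strict Implicit. Unset Printing Implicit Defensive.
Import Order.TTheory GRing.Theory Num.Theory.
Local Open Scope ring_scope.

(* Indices 1..r are represented by 'I_r (0-based). n k j is only used for j < k. *)

Definition pk (r : nat) (n : 'I_r -> 'I_r -> nat) (k : 'I_r) : nat :=
  (\sum_(j < r | (j < k)%N) n k j)%N.

Definition qj (r : nat) (n : 'I_r -> 'I_r -> nat) (j : 'I_r) : nat :=
  (\sum_(k < r | (j < k)%N) n k j)%N.

Definition signvec (r : nat) (e : 'I_r -> int) : Prop :=
  forall i, e i = 1 \/ e i = -1.

Definition epsdelta_sum (r : nat) (n : 'I_r -> 'I_r -> nat)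
    (eps delta : 'I_r -> int) : int :=
  \sum_(k < r) \sum_(j < r | (j < k)%N) eps j * delta k * (n k j)%:Z.

From HB Require Import structures.
From mathcomp Require Import all_boot all_order all_algebra.
From mathcomp Require Import reals trigo.
From mathcomp Require Import ring zify.
Set Implicit Arguments. Unset Strict Implicit. Unset Printing Implicit Defensive.
Import Order.TTheory GRing.Theory Num.Theory.
Local Open Scope ring_scope.

(* Writing [eps_j delta_k = 1 - (1 - eps_j) - (1 - delta_k) + (1 - eps_j)(1 - delta_k)]
   and summing gives
     S(eps, delta) = sum_k p_k - sum_j (1 - eps_j) q_j - sum_k (1 - delta_k) p_k
                     + sum_{j<k} (1 - eps_j)(1 - delta_k) n_kj,
   where every factor [1 - eps_j], [1 - delta_k] is 0 or 2.  Condition (i) says that S is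
   constant modulo 8, with value 0 or 4.  Flipping a single sign of eps (resp. delta)
   changes S by [2 q_j] (resp. [2 p_k]), and flipping eps_j and delta_k together, j < k,
   changes it by [2 q_j + 2 p_k - 4 n_kj]; so (i) forces (ii).  Conversely, under (ii)
   every correction term above is divisible by 8, so S is congruent to [sum_k p_k], a
   multiple of 4, modulo 8. *)

Section SignFlips.
Variable r : nat.

Definition ones : 'I_r -> int := fun _ => 1.
Definition flip_at (i : 'I_r) : 'I_r -> int := fun x => if x == i then -1 else 1.

Lemma signvec_ones : signvec ones.
Proof. by move=> i; left. Qed.

Lemma signvec_flip_at i : signvec (flip_at i).
Proof. by move=> x; rewrite /flip_at; case: (x == i); [right | left]. Qed.

Lemma sum_flip_at i (F : 'I_r -> int) :
  \sum_(x < r) (1 - flip_at i x) * F x = 2 * F i.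
Proof.
rewrite (bigD1 i) //= big1 ?addr0 => [|x /negbTE xi]; first by rewrite /flip_at eqxx.
by rewrite /flip_at xi subrr mul0r.
Qed.

Lemma sum_ones (F : 'I_r -> int) : \sum_(x < r) (1 - ones x) * F x = 0.
Proof. by rewrite big1 // => x _; rewrite subrr mul0r. Qed.

Lemma signvec_dvd2 (e : 'I_r -> int) i : signvec e -> (2 %| 1 - e i)%Z.
Proof. by move=> /(_ i) [] ->. Qed.

End SignFlips.

Arguments ones {r} _.
Arguments signvec_ones {r}.

Section EpsDeltaSum.
Variables (r : nat) (n : 'I_r -> 'I_r -> nat).
Implicit Types (eps delta : 'I_r -> int) (j k : 'I_r).

Local Notation S := (epsdelta_sum n).
Local Notation N := (\sum_(k < r) (pk n k)%:Z).

Lemma pkE k : (pk n k)%:Z = \sum_(j < r | (j < k)%N) (n k j)%:Z.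
Proof. by rewrite /pk -natz natr_sum; apply: eq_bigr => j _; rewrite natz. Qed.

Lemma qjE j : (qj n j)%:Z = \sum_(k < r | (j < k)%N) (n k j)%:Z.
Proof. by rewrite /qj -natz natr_sum; apply: eq_bigr => k _; rewrite natz. Qed.

Lemma epsdelta_sum_expand eps delta :
  S eps delta =
  N - \sum_(j < r) (1 - eps j) * (qj n j)%:Z
    - \sum_(k < r) (1 - delta k) * (pk n k)%:Z
    + \sum_(k < r) \sum_(j < r | (j < k)%N) (1 - eps j) * (1 - delta k) * (n k j)%:Z.
Proof.
have -> : \sum_(j < r) (1 - eps j) * (qj n j)%:Z =
          \sum_(k < r) \sum_(j < r | (j < k)%N) (1 - eps j) * (n k j)%:Z.
  rewrite (exchange_big_dep xpredT) //=.
  by apply: eq_bigr => j _; rewrite qjE mulr_sumr.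
rewrite (eq_bigr _ (fun k _ => pkE k)).
under [\sum_(k < r) (1 - delta k) * _]eq_bigr do rewrite pkE mulr_sumr.
rewrite -!sumrB -big_split /=; apply: eq_bigr => k _.
by rewrite -!sumrB -big_split /=; apply: eq_bigr => j _; ring.
Qed.

Lemma epsdelta_sum_ones : S ones ones = N.
Proof.
rewrite epsdelta_sum_expand !sum_ones [X in _ + X]big1 ?subr0 ?addr0 // => k _.
by rewrite big1 // => j _; rewrite subrr !mul0r.
Qed.

Lemma epsdelta_sum_flipl j : S (flip_at j) ones = N - 2 * (qj n j)%:Z.
Proof.
rewrite epsdelta_sum_expand sum_flip_at sum_ones [X in _ + X]big1 ?subr0 ?addr0 // => k _.
by rewrite big1 // => i _; rewrite subrr mulr0 mul0r.
Qed.

Lemma epsdelta_sum_flipr k : S ones (flip_at k) = N - 2 * (pk n k)%:Z.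
Proof.
rewrite epsdelta_sum_expand sum_flip_at sum_ones [X in _ + X]big1 ?subr0 ?addr0 // => k' _.
by rewrite big1 // => i _; rewrite subrr !mul0r.
Qed.

Lemma epsdelta_sum_flip2 j k : (j < k)%N ->
  S (flip_at j) (flip_at k) = N - 2 * (qj n j)%:Z - 2 * (pk n k)%:Z + 4 * (n k j)%:Z.
Proof.
move=> ltjk; rewrite epsdelta_sum_expand !sum_flip_at; congr (_ + _).
rewrite (bigD1 k) //= [X in _ + X]big1 ?addr0 => [|k' /negbTE k'k]; last first.
  by rewrite big1 // => i _; rewrite /flip_at k'k subrr mulr0 mul0r.
rewrite (bigD1 j) //= [X in _ + X]big1 ?addr0 => [|i /andP[_ /negbTE ij]].
  by rewrite /flip_at !eqxx; ring.
by rewrite /flip_at ij subrr !mul0r.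
Qed.

Lemma epsdelta_sum_const_mod8 (c : int) :
  (forall eps delta, signvec eps -> signvec delta -> (S eps delta == c %[mod 8])%Z) ->
  (forall j k, (j < k)%N -> ~~ odd (n k j)) /\
  (forall k, (4 %| pk n k)%N) /\ (forall j, (4 %| qj n j)%N).
Proof.
move=> Sc.
have dvd8 eps delta : signvec eps -> signvec delta -> (8 %| S eps delta - N)%Z.
  move=> heps hdelta; rewrite -eqz_mod_dvd -epsdelta_sum_ones.
  by rewrite (eqP (Sc _ _ heps hdelta)) (eqP (Sc _ _ signvec_ones signvec_ones)).
have q4 j : (4 %| qj n j)%N.
  by have := dvd8 _ _ (signvec_flip_at j) signvec_ones; rewrite epsdelta_sum_flipl; lia.
have p4 k : (4 %| pk n k)%N.
  by have := dvd8 _ _ signvec_ones (signvec_flip_at k); rewrite epsdelta_sum_flipr; lia.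
split=> // j k ltjk; rewrite -dvdn2.
have := dvd8 _ _ (signvec_flip_at j) (signvec_flip_at k).
by rewrite epsdelta_sum_flip2 //; have := q4 j; have := p4 k; lia.
Qed.

Lemma epsdelta_sum_mod8 eps delta :
  (forall j k, (j < k)%N -> ~~ odd (n k j)) ->
  (forall k, (4 %| pk n k)%N) -> (forall j, (4 %| qj n j)%N) ->
  signvec eps -> signvec delta -> (S eps delta == (\sum_(k < r) pk n k)%N %[mod 8])%Z.
Proof.
move=> n_even p4 q4 heps hdelta; rewrite epsdelta_sum_expand eqz_mod_dvd.
rewrite -natz natr_sum (eq_bigr _ (fun k _ => natz _)).
have cancelN (a b c : int) : N - a - b + c - N = c - a - b by ring.
rewrite cancelN !rpredB ?rpred_sum // => [k _|j _|k _].
- apply: rpred_sum => j ltjk; rewrite (_ : 8 = 2 * 2 * 2) //.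
  by rewrite !dvdz_mul ?signvec_dvd2 // dvdzE absz_nat dvdn2 n_even.
- by rewrite (_ : 8 = 2 * 4) //; apply: dvdz_mul; [exact: signvec_dvd2 | exact: q4].
- by rewrite (_ : 8 = 2 * 4) //; apply: dvdz_mul; [exact: signvec_dvd2 | exact: p4].
Qed.

End EpsDeltaSum.

Lemma mod8_of_dvd4 (x : nat) : (4 %| x)%N -> (x%:Z == 4 * (odd (x %/ 4))%:Z %[mod 8])%Z.
Proof.
move=> /dvdnP[y ->]; rewrite mulnK // eqz_mod_dvd -{1}(odd_double_half y).
by apply/dvdzP; exists (y./2)%:Z; rewrite -mul2n !PoszM PoszD PoszM; ring.
Qed.

Lemma pi_quarter_mod_2pi (R : realType) (s m : int) :
  (exists t : int, pi / 4 * s%:~R = m%:~R * pi + t%:~R * (2 * pi) :> R)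
  <-> (s == 4 * m %[mod 8])%Z.
Proof.
have pi_neq0 : (pi : R) != 0 by rewrite gt_eqF // pi_gt0.
have diffE t : pi / 4 * s%:~R - (m%:~R * pi + t%:~R * (2 * pi))
               = pi / 4 * (s - (4 * m + 8 * t))%:~R :> R.
  by rewrite !(rmorphB, rmorphD, rmorphM) /=; field.
rewrite eqz_mod_dvd; split=> [[t /eqP] | /dvdzP[t st]].
  rewrite -subr_eq0 diffE !mulf_eq0 (negbTE pi_neq0) invr_eq0 pnatr_eq0 intr_eq0 /=.
  by move=> /eqP st; apply/dvdzP; exists t; lia.
by exists t; apply/eqP; rewrite -subr_eq0 diffE (_ : s - _ = 0) ?mulr0 //; lia.
Qed.

Theorem mainTheorem8 (R : realType) (r : nat) (hr : (2 <= r)%N)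
    (n : 'I_r -> 'I_r -> nat) :
  (exists m : nat, (m <= 1)%N /\
     forall eps delta : 'I_r -> int, signvec eps -> signvec delta ->
       exists t : int,
         pi / 4 * (epsdelta_sum n eps delta)%:~R
           = (m%:R * pi + t%:~R * (2 * pi) :> R))
  <->
  ((forall j k : 'I_r, (j < k)%N -> ~~ odd (n k j)) /\
   (forall k : 'I_r, (4 %| pk n k)%N) /\
   (forall j : 'I_r, (4 %| qj n j)%N)).
Proof.
split=> [[m [_ Sm]] | [n_even [p4 q4]]].
  apply: (epsdelta_sum_const_mod8 (c := 4 * m%:Z)) => eps delta heps hdelta.
  exact/(pi_quarter_mod_2pi R)/Sm.
have sum_p4 : (4 %| \sum_(k < r) pk n k)%N by apply: dvdn_sum => k _; exact: p4.
exists (odd ((\sum_(k < r) pk n k) %/ 4)); split; first exact: leq_b1.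
move=> eps delta heps hdelta; apply/(pi_quarter_mod_2pi R _ (_ %:Z)).
by rewrite (eqP (epsdelta_sum_mod8 n_even p4 q4 heps hdelta)) mod8_of_dvd4.
Qed.
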